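(* Let $A$ be a graded Poisson algebra with a conjugation $\rho$, let $*$ be a nondegenerate short star-product on $A$, $\mathbf{A}=(A,* )$ the corresponding quantization, $g$ and $T$ the corresponding automorphism and nondegenerate $g$-twisted trace, and regard $\rho$ as an antilinear map $\mathbf{A}\to\mathbf{A}$ (as $\mathbf{A}=A$ as filtered vector spaces). Then: (i) $*$ is conjugation-invariant if and only if $\rho$ is a conjugation on $\mathbf{A}$ (an antilinear algebra automorphism) which conjugates $T$, i.e., $T(\rho(\mathbf{a}))=\overline{T(\mathbf{a})}$ (hence $\rho$ commutes with $g$); (ii) in this situation, $*$ is Hermitian if and only if in addition $\rho^2=g$.
   Context: $A=\bigoplus_{d\ge0}A_d$ commutative graded with $A_0=\mathbb{C}$, $\dim A_d<\infty$, Poisson bracket of degree $-2$; $s=(-1)^d$. Conjugation on $A$: $\mathbb{C}$-antilinear degree-preserving Poisson automorphism; conjugation on a quantization: antilinear filtration-preserving algebra automorphism commuting with $s$. Star-product $a*b=\sum_kC_k(a,b)$ ($C_k$ degree $-2k$, $C_0$ product, $C_1(a,b)-C_1(b,a)=\{a,b\}$); short: $C_k(a,b)=0$ for $k>\min(\deg a,\deg b)$; nondegenerate: $\langle a,b\rangle=\mathrm{CT}(a*b)$ nondegenerate on each $A_i$. $T(\mathbf{a})=\mathrm{CT}(\mathbf{a})$ on $(A,* )$, and $g$ is the unique filtration-preserving automorphism with $T(\mathbf{a}*\mathbf{b})=T(\mathbf{b}*g(\mathbf{a}))$. Conjugation-invariant: $\rho(a*b)=\rho(a)*\rho(b)$.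 A conjugation-invariant short star-product is Hermitian if $\mathrm{CT}(a*b)=\mathrm{CT}(b*\rho^2(a))$. *)

From HB Require Import structures.
From mathcomp Require Import all_boot all_algebra.
From mathcomp Require Export complex reals.
Set Implicit Arguments.
Unset Strict Implicit.
Unset Printing Implicit Defensive.
Import GRing.Theory Num.Theory.
Local Open Scope ring_scope.

Section GradedPoisson.
Variable R : realType.
Local Notation C := R[i].
Variable A : comAlgType C.
(* [pi d] is the projection of A = (+)_d A_d onto the summand A_d. *)
Variable pi : nat -> A -> A.

Definition homog (d : nat) (x : A) : Prop := pi d x = x.

Definition in_filt (n : nat) (x : A) : Prop := forall d, (n < d)%N -> pi d x = 0.

Definition filt_preserving (f : A -> A) : Prop :=
  forall n x, in_filt n x -> in_filt n (f x).

Definition C_linear (f : A -> A) : Prop :=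
  forall (c : C) x y, f (c *: x + y) = c *: f x + f y.

Definition C_antilinear (f : A -> A) : Prop :=
  forall (c : C) x y, f (c *: x + y) = c^* *: f x + f y.

Definition C_bilinear (B : A -> A -> A) : Prop :=
  (forall y, C_linear (fun x => B x y)) /\ (forall x, C_linear (B x)).

Definition of_degree_minus (m : nat) (B : A -> A -> A) : Prop :=
  forall d e x y, homog d x -> homog e y ->
    ((m <= d + e)%N -> homog (d + e - m) (B x y)) /\
    ((d + e < m)%N -> B x y = 0).

Record graded_algebra : Prop := {
  pi_linear : forall d, C_linear (pi d);
  pi_proj : forall d e x, pi d (pi e x) = if d == e then pi e x else 0;
  pi_decomp : forall x, exists N : nat,
      (forall d, (N <= d)%N -> pi d x = 0) /\ x = \sum_(d < N) pi d x;
  pi_mul : forall d e x y, homog d x -> homog e y -> homog (d + e) (x * y);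
  pi_one : homog 0 1;
  A0_scalar : forall x, homog 0 x -> exists c : C, x = c *: 1;
  Ad_findim : forall d, exists s : seq A,
      forall x, homog d x -> exists c : nat -> C,
        x = \sum_(i < size s) c i *: s`_i
}.

Record poisson_bracket (br : A -> A -> A) : Prop := {
  br_bilinear : C_bilinear br;
  br_antisym : forall x y, br x y = - br y x;
  br_jacobi : forall x y z, br x (br y z) + br y (br z x) + br z (br x y) = 0;
  br_leibniz : forall x y z, br x (y * z) = br x y * z + y * br x z;
  br_degree : of_degree_minus 2 br
}.

Definition graded_poisson (br : A -> A -> A) : Prop :=
  graded_algebra /\ poisson_bracket br.

Record poisson_conjugation (br : A -> A -> A) (rho : A -> A) : Prop := {
  conj_antilinear : C_antilinear rho;
  conj_bij : bijective rho;
  conj_degree : forall d x, rho (pi d x) = pi d (rho x);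
  conj_mul : forall x y, rho (x * y) = rho x * rho y;
  conj_one : rho 1 = 1;
  conj_br : forall x y, rho (br x y) = br (rho x) (rho y)
}.

Record star_product (br : A -> A -> A) (Ck : nat -> A -> A -> A)
    (star : A -> A -> A) : Prop := {
  Ck_bilinear : forall k, C_bilinear (Ck k);
  Ck_degree : forall k, of_degree_minus (2 * k) (Ck k);
  C0_mul : forall x y, Ck 0%N x y = x * y;
  C1_br : forall x y, Ck 1%N x y - Ck 1%N y x = br x y;
  star_sum : forall x y, exists N : nat,
      (forall k, (N <= k)%N -> Ck k x y = 0) /\ star x y = \sum_(k < N) Ck k x y;
  star_assoc : forall x y z, star x (star y z) = star (star x y) z
}.

Definition short (Ck : nat -> A -> A -> A) : Prop :=
  forall k d e x y, homog d x -> homog e y -> (minn d e < k)%N -> Ck k x y = 0.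

(* T = CT is the constant term: the A_0 = C component *)
Definition constant_term (T : A -> C) : Prop := forall x, pi 0 x = T x *: 1.

Definition nondegenerate_star (star : A -> A -> A) (T : A -> C) : Prop :=
  forall i x, homog i x ->
    ((forall y, homog i y -> T (star x y) = 0) -> x = 0) /\
    ((forall y, homog i y -> T (star y x) = 0) -> x = 0).

Definition parity_op (s : A -> A) : Prop :=
  C_linear s /\ forall d x, homog d x -> s x = (-1) ^+ d *: x.

Record twist_automorphism (star : A -> A -> A) (T : A -> C) (g : A -> A) : Prop := {
  g_linear : C_linear g;
  g_bij : bijective g;
  g_filt : filt_preserving g;
  g_mul : forall x y, g (star x y) = star (g x) (g y);
  g_one : g 1 = 1;
  g_twist : forall x y, T (star x y) = T (star y (g x))
}.

Record quant_conjugation (s : A -> A) (star : A -> A -> A) (rho : A -> A) : Prop := {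
  qconj_antilinear : C_antilinear rho;
  qconj_bij : bijective rho;
  qconj_filt : filt_preserving rho;
  qconj_mul : forall x y, rho (star x y) = star (rho x) (rho y);
  qconj_one : rho 1 = 1;
  qconj_s : forall x, rho (s x) = s (rho x)
}.

Definition conj_invariant (star : A -> A -> A) (rho : A -> A) : Prop :=
  forall x y, rho (star x y) = star (rho x) (rho y).

Definition hermitian_star (star : A -> A -> A) (T : A -> C) (rho : A -> A) : Prop :=
  conj_invariant star rho /\
  forall x y, T (star x y) = T (star y (rho (rho x))).

End GradedPoisson.

From HB Require Import structures.
From mathcomp Require Import all_boot all_algebra.
From mathcomp Require Import complex reals.
From mathcomp Require Import zify.
Set Implicit Arguments.
Unset Strict Implicit.
Unset Printing Implicit Defensive.
Import GRing.Theory Num.Theory.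
Local Open Scope ring_scope.

(* Since [rho] preserves degrees, is antilinear and fixes 1, it is automatically
   filtration-preserving, commutes with the parity [s] and conjugates the
   constant term [T]; so conjugation invariance of [*] says exactly that [rho]
   is a conjugation of the quantization.  Shortness makes [CT(y * z)], for [y]
   of degree [i], depend only on the degree-[i] component of [z]; with
   nondegeneracy on each [A_i], the pairing [CT(y * z)] separates points, so the
   twist [g] is the unique map with [T(a * b) = T(b * g(a))].  Both [rho^2] (for
   a Hermitian product) and [rho g rho^-1] are such twists, hence equal [g]. *)

Lemma sum_ord_vanishing (V : nmodType) (F : nat -> V) N M :
  (forall k, (N <= k)%N -> F k = 0) -> (N <= M)%N ->
  \sum_(k < N) F k = \sum_(k < M) F k.
Proof.
move=> FN NM; rewrite (big_ord_widen _ _ NM).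
rewrite [RHS](bigID (fun k : 'I_M => k < N)%N) /=.
by rewrite [X in _ + X]big1 ?addr0 // => k; rewrite -leqNgt => /FN.
Qed.

Section CLinear.
Variables (R : realType) (A : comAlgType R[i]) (f : A -> A).
Hypothesis f_linear : C_linear f.

#[local] HB.instance Definition _ := GRing.isLinear.Build R[i] A A *:%R f f_linear.

Lemma C_linear0 : f 0 = 0.
Proof. exact: raddf0. Qed.

Lemma C_linearB : {morph f : x y / x - y}.
Proof. exact: raddfB. Qed.

Lemma C_linear_sum I r (P : pred I) (F : I -> A) :
  f (\sum_(i <- r | P i) F i) = \sum_(i <- r | P i) f (F i).
Proof. exact: raddf_sum. Qed.

End CLinear.

Section Quantization.
Variables (R : realType) (A : comAlgType R[i]) (pi : nat -> A -> A).
Hypothesis pi_graded : graded_algebra pi.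

Lemma homog_pi d x : homog pi d (pi d x).
Proof. by rewrite /homog (pi_proj pi_graded) eqxx. Qed.

Lemma graded_eq0 x : (forall d, pi d x = 0) -> x = 0.
Proof.
move=> pix0; have [N [_ ->]] := pi_decomp pi_graded x.
by apply: big1 => d _; apply: pix0.
Qed.

Variables (br : A -> A -> A) (Ck : nat -> A -> A -> A) (star : A -> A -> A).
Hypothesis star_prod : star_product pi br Ck star.

Lemma star_sumE x y M : (forall k, (M <= k)%N -> Ck k x y = 0) ->
  star x y = \sum_(k < M) Ck k x y.
Proof.
move=> CM; have [N [CN ->]] := star_sum star_prod x y.
rewrite (sum_ord_vanishing CN (leq_maxl N M)).
by rewrite (sum_ord_vanishing CM (leq_maxr N M)).
Qed.

Lemma star_linear x : C_linear (star x).
Proof.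
move=> c u v.
have [Nu [Cu _]] := star_sum star_prod x u.
have [Nv [Cv _]] := star_sum star_prod x v.
pose M := maxn Nu Nv.
have CuM k : (M <= k)%N -> Ck k x u = 0 by rewrite geq_max => /andP[/Cu].
have CvM k : (M <= k)%N -> Ck k x v = 0 by rewrite geq_max => /andP[_ /Cv].
rewrite !(star_sumE (M := M)) // => [|k kM].
  rewrite scaler_sumr -big_split; apply: eq_bigr => k _.
  exact: (Ck_bilinear star_prod k).2.
by rewrite (Ck_bilinear star_prod k).2 CuM ?CvM ?scaler0 ?addr0.
Qed.

Variable T : A -> R[i].
Hypothesis T_ct : constant_term pi T.

Lemma constant_term_linear : GRing.linear_for *%R T.
Proof.
move=> c x y; apply: (fmorph_inj (in_alg A)).
by rewrite /= -(T_ct (c *: x + y)) (pi_linear pi_graded) !T_ct scalerDl scalerA.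
Qed.

#[local] HB.instance Definition _ :=
  GRing.isLinear.Build R[i] A R[i] *%R T constant_term_linear.

Lemma constant_term_homog_eq0 d x : homog pi d x -> d != 0%N -> T x = 0.
Proof.
move=> xd d_neq0; apply: (fmorph_inj (in_alg A)).
by rewrite /= -T_ct -xd (pi_proj pi_graded) eq_sym (negPf d_neq0) scale0r.
Qed.

Hypothesis Ck_short : short pi Ck.

(* [Ck k y w] has degree [i + j - 2k], so it has a constant term only if
   [i + j = 2k], which shortness excludes for [i != j]. *)
Lemma constant_term_Ck_cross i j k y w :
  homog pi i y -> homog pi j w -> i != j -> T (Ck k y w) = 0.
Proof.
move=> yi wj ij; have [Ck_homog Ck_low] := Ck_degree star_prod k yi wj.
case: (ltnP (i + j) (2 * k)) => [/Ck_low -> | le2k]; first exact: raddf0.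
have [ij2k | ij2k] := eqVneq (i + j - 2 * k)%N 0%N.
  rewrite (Ck_short yi wj) ?raddf0 //.
  by move: ij => /eqP ij; lia.
exact: constant_term_homog_eq0 (Ck_homog le2k) ij2k.
Qed.

Lemma constant_term_star_cross i j y w :
  homog pi i y -> homog pi j w -> i != j -> T (star y w) = 0.
Proof.
move=> yi wj ij; have [N [_ ->]] := star_sum star_prod y w.
by rewrite raddf_sum big1 // => k _; apply: constant_term_Ck_cross yi wj ij.
Qed.

Lemma constant_term_star_orth i y w :
  homog pi i y -> pi i w = 0 -> T (star y w) = 0.
Proof.
move=> yi wi; have [N [_ ->]] := pi_decomp pi_graded w.
rewrite (C_linear_sum (star_linear y)) raddf_sum big1 // => d _.
have [-> | di] := eqVneq (d : nat) i.
  by rewrite wi (C_linear0 (star_linear y)) raddf0.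
by apply: constant_term_star_cross yi (homog_pi d w) _; rewrite eq_sym.
Qed.

Lemma constant_term_star_homog i y z :
  homog pi i y -> T (star y z) = T (star y (pi i z)).
Proof.
move=> yi; apply/eqP; rewrite -subr_eq0 -linearB -(C_linearB (star_linear y)).
apply/eqP/(constant_term_star_orth yi).
by rewrite (C_linearB (pi_linear pi_graded i)) (pi_proj pi_graded) eqxx subrr.
Qed.

Hypothesis star_nondeg : nondegenerate_star pi star T.

Lemma star_pairing_inj z1 z2 : (forall y, T (star y z1) = T (star y z2)) -> z1 = z2.
Proof.
move=> eqT; apply/eqP; rewrite -subr_eq0; apply/eqP/graded_eq0 => d.
apply: (star_nondeg (homog_pi d (z1 - z2))).2 => y yd.
rewrite -(constant_term_star_homog _ yd) (C_linearB (star_linear y)).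
by rewrite raddfB /= eqT subrr.
Qed.

Variable g : A -> A.
Hypothesis g_twisting : twist_automorphism pi star T g.

Lemma twist_unique h : (forall x y, T (star x y) = T (star y (h x))) -> h =1 g.
Proof.
by move=> h_twist x; apply: star_pairing_inj => y; rewrite -h_twist (g_twist g_twisting).
Qed.

Variable rho : A -> A.
Hypothesis rho_conj : poisson_conjugation pi br rho.

#[local] HB.instance Definition _ :=
  GRing.isLinear.Build R[i] A A (Num.conj \; *:%R) rho (conj_antilinear rho_conj).

Lemma conj_homog d x : homog pi d x -> homog pi d (rho x).
Proof. by move=> xd; rewrite /homog -(conj_degree rho_conj) xd. Qed.

Lemma conj_constant_term x : T (rho x) = (T x)^*.
Proof.
apply: (fmorph_inj (in_alg A)).
by rewrite /= -T_ct -(conj_degree rho_conj) T_ct linearZ /= (conj_one rho_conj).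
Qed.

Lemma conj_filt : filt_preserving pi rho.
Proof. by move=> n x xn d nd; rewrite -(conj_degree rho_conj) xn // raddf0. Qed.

Variable s : A -> A.
Hypothesis s_parity : parity_op pi s.

Lemma conj_parity x : rho (s x) = s (rho x).
Proof.
have [N [_ ->]] := pi_decomp pi_graded x.
rewrite (C_linear_sum s_parity.1) !raddf_sum (C_linear_sum s_parity.1).
apply: eq_bigr => d _.
rewrite (s_parity.2 d _ (homog_pi d x)) (s_parity.2 d _ (conj_homog (homog_pi d x))).
by rewrite /= linearZ /= rmorphXn rmorphN1.
Qed.

Lemma conj_invariant_quant_conjugation :
  conj_invariant star rho -> quant_conjugation pi s star rho.
Proof.
move=> rho_star; split => //.
- exact: conj_antilinear rho_conj.
- exact: conj_bij rho_conj.
- exact: conj_filt.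
- exact: conj_one rho_conj.
- exact: conj_parity.
Qed.

Lemma conj_invariant_twist_comm :
  conj_invariant star rho -> forall x, rho (g x) = g (rho x).
Proof.
move=> rho_star x; have [rho' rhoK rho'K] := conj_bij rho_conj.
suff conj_twist : (fun x => rho (g (rho' x))) =1 g.
  by rewrite -[g (rho x)]conj_twist /= rhoK.
apply: twist_unique => {}x y.
(* both sides are the conjugate of [T (rho' x * rho' y)] *)
rewrite -{1}(rho'K x) -{1 2}(rho'K y) -!rho_star !conj_constant_term.
by rewrite (g_twist g_twisting).
Qed.

Lemma hermitian_starE : conj_invariant star rho ->
  hermitian_star star T rho <-> forall x, rho (rho x) = g x.
Proof.
move=> rho_star; split => [[_ herm] | rho2]; first exact: twist_unique herm.
by split=> // x y; rewrite rho2 (g_twist g_twisting).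
Qed.

End Quantization.

Theorem lemma3p23 (R : realType) (A : comAlgType R[i]) (pi : nat -> A -> A)
  (br : A -> A -> A) (rho : A -> A) (Ck : nat -> A -> A -> A)
  (star : A -> A -> A) (T : A -> R[i]) (g : A -> A) (s : A -> A) :
  graded_poisson pi br ->
  poisson_conjugation pi br rho ->
  star_product pi br Ck star ->
  short pi Ck ->
  constant_term pi T ->
  nondegenerate_star pi star T ->
  twist_automorphism pi star T g ->
  parity_op pi s ->
  (conj_invariant star rho <->
     (quant_conjugation pi s star rho /\ forall x, T (rho x) = (T x)^*)) /\
  (conj_invariant star rho -> forall x, rho (g x) = g (rho x)) /\
  (conj_invariant star rho -> (hermitian_star star T rho <-> forall x, rho (rho x) = g x)).
Proof.
move=> [graded _] rho_conj star_prod Ck_short T_ct star_nondeg g_twisting s_parity.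
split; [split | split].
- move=> rho_star; split.
    exact: (conj_invariant_quant_conjugation graded rho_conj s_parity rho_star).
  exact: (conj_constant_term T_ct rho_conj).
- by case=> /qconj_mul.
- exact: (conj_invariant_twist_comm graded star_prod T_ct Ck_short star_nondeg
    g_twisting rho_conj).
- move=> rho_star.
  exact: (hermitian_starE graded star_prod T_ct Ck_short star_nondeg g_twisting
    rho_star).
Qed.
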